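(* Let $(A,B,Z,T)$ be a Hopf-Galois system over a field $k$. Then the bialgebras $A$ and $B$ are Hopf algebras (i.e. admit antipodes).
   Context: All tensor products are over a field $k$; $m_X$, $u_X$ denote multiplication and unit of an algebra $X$, $\Delta_X,\varepsilon_X$ comultiplication and counit of a bialgebra $X$. A Hopf-Galois system consists of four non-zero $k$-algebras $(A,B,Z,T)$ such that: (HG1) $A$ and $B$ are bialgebras; (HG2) $Z$ is an $A$-$B$-bicomodule algebra, with left $A$-coaction $\alpha:Z\to A\otimes Z$ and right $B$-coaction $\beta:Z\to Z\otimes B$; (HG3) there are algebra morphisms $\gamma:A\to Z\otimes T$ and $\delta:B\to T\otimes Z$ such that $(\gamma\otimes 1_Z)\circ\alpha=(1_Z\otimes\delta)\circ\beta$, $(\alpha\otimes 1_T)\circ\gamma=(1_A\otimes\gamma)\circ\Delta_A$, and $(1_T\otimes\beta)\circ\delta=(\delta\otimes 1_B)\circ\Delta_B$; (HG4) there is a linear map $S:T\to Z$ such that $m_Z\circ(1_Z\otimes S)\circ\gamma=u_Z\circ\varepsilon_A$ and $m_Z\circ(S\otimes 1_Z)\circ\delta=u_Z\circ\varepsilon_B$. *)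

From mathcomp Require Import all_boot all_algebra.
Set Implicit Arguments. Unset Strict Implicit. Unset Printing Implicit Defensive.
Import GRing.Theory.
Local Open Scope ring_scope.

(* Tensor products over a field k are encoded by formal finite sums
   (sequences of pure tensors); two formal sums are equal in the tensor
   product iff every (bi/tri)linear form to k takes the same value on them
   (over a field, U (x) V is separated by its dual Bil(U,V;k)). *)

Section Tensors.
Variable k : fieldType.

Definition bilin (U V : lmodType k) (b : U -> V -> k) : Prop :=
  (forall (a : k) u u' v, b (a *: u + u') v = a * b u v + b u' v) /\
  (forall (a : k) u v v', b u (a *: v + v') = a * b u v + b u v').

Definition trilin (U V W : lmodType k) (c : U -> V -> W -> k) : Prop :=
  [/\ (forall (a : k) u u' v w, c (a *: u + u') v w = a * c u v w + c u' v w),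
      (forall (a : k) u v v' w, c u (a *: v + v') w = a * c u v w + c u v' w) &
      (forall (a : k) u v w w', c u v (a *: w + w') = a * c u v w + c u v w')].

Definition teq2 (U V : lmodType k) (t t' : seq (U * V)) : Prop :=
  forall b : U -> V -> k, bilin b ->
    \sum_(p <- t) b p.1 p.2 = \sum_(p <- t') b p.1 p.2.

Definition teq3 (U V W : lmodType k) (t t' : seq (U * V * W)) : Prop :=
  forall c : U -> V -> W -> k, trilin c ->
    \sum_(p <- t) c p.1.1 p.1.2 p.2 = \sum_(p <- t') c p.1.1 p.1.2 p.2.

Definition tscale (U V : lmodType k) (a : k) (t : seq (U * V)) : seq (U * V) :=
  [seq (a *: p.1, p.2) | p <- t].

Definition tlinear (X U V : lmodType k) (f : X -> seq (U * V)) : Prop :=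
  forall (a : k) x y, teq2 (f (a *: x + y)) (tscale a (f x) ++ f y).

Definition tmul (U V : algType k) (t s : seq (U * V)) : seq (U * V) :=
  [seq (p.1 * q.1, p.2 * q.2) | p <- t, q <- s].

Definition talg_morph (X U V : algType k) (f : X -> seq (U * V)) : Prop :=
  [/\ tlinear f, teq2 (f 1) [:: (1, 1)] &
      forall x y, teq2 (f (x * y)) (tmul (f x) (f y))].

(* (f (x) 1) t  and  (1 (x) f) t *)
Definition tmap_l (U V W X : Type) (f : U -> seq (V * W)) (t : seq (U * X))
  : seq (V * W * X) := [seq ((q.1, q.2), p.2) | p <- t, q <- f p.1].
Definition tmap_r (U V W X : Type) (f : X -> seq (V * W)) (t : seq (U * X))
  : seq (U * V * W) := [seq ((p.1, q.1), q.2) | p <- t, q <- f p.2].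

Definition alg_morph_k (X : algType k) (e : X -> k) : Prop :=
  [/\ forall (a : k) x y, e (a *: x + y) = a * e x + e y,
      e 1 = 1 & forall x y, e (x * y) = e x * e y].

Definition is_bialgebra (A : algType k) (D : A -> seq (A * A)) (e : A -> k)
  : Prop :=
  [/\ talg_morph D, alg_morph_k e,
      (forall a, teq3 (tmap_l D (D a)) (tmap_r D (D a))),
      (forall a, \sum_(p <- D a) e p.1 *: p.2 = a) &
      (forall a, \sum_(p <- D a) e p.2 *: p.1 = a)].

Definition has_antipode (A : algType k) (D : A -> seq (A * A)) (e : A -> k)
  : Prop :=
  exists S : {linear A -> A},
    (forall a, \sum_(p <- D a) S p.1 * p.2 = e a *: 1) /\
    (forall a, \sum_(p <- D a) p.1 * S p.2 = e a *: 1).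

Definition hopf_galois_system (A B Z T : algType k)
  (DA : A -> seq (A * A)) (eA : A -> k)
  (DB : B -> seq (B * B)) (eB : B -> k)
  (alpha : Z -> seq (A * Z)) (beta : Z -> seq (Z * B))
  (gamma : A -> seq (Z * T)) (delta : B -> seq (T * Z))
  (S : {linear T -> Z}) : Prop :=
  [/\ is_bialgebra DA eA /\ is_bialgebra DB eB,
      (* HG2: Z is an A-B-bicomodule algebra *)
      [/\ [/\ talg_morph alpha,
          (forall z, teq3 (tmap_l DA (alpha z)) (tmap_r alpha (alpha z))) &
          (forall z, \sum_(p <- alpha z) eA p.1 *: p.2 = z)],
          talg_morph beta,
          (forall z, teq3 (tmap_l beta (beta z)) (tmap_r DB (beta z))),
          (forall z, \sum_(p <- beta z) eB p.2 *: p.1 = z) &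
          (forall z, teq3 (tmap_r beta (alpha z)) (tmap_l alpha (beta z)))],
      [/\ talg_morph gamma, talg_morph delta,
          (forall z, teq3 (tmap_l gamma (alpha z)) (tmap_r delta (beta z))),
          (forall a, teq3 (tmap_l alpha (gamma a)) (tmap_r gamma (DA a))) &
          (forall b, teq3 (tmap_r beta (delta b)) (tmap_l delta (DB b)))] &
      (forall a, \sum_(p <- gamma a) p.1 * S p.2 = eA a *: 1) /\
      (forall b, \sum_(p <- delta b) S p.1 * p.2 = eB b *: 1)].

End Tensors.

From HB Require Import structures.
From mathcomp Require Import all_boot all_algebra.
From mathcomp Require Import boolp classical_sets.
Set Implicit Arguments. Unset Strict Implicit. Unset Printing Implicit Defensive.
Import GRing.Theory.
Local Open Scope ring_scope.

(* Write α(z) = z₋₁ ⊗ z₀ and γ(a) = a⁽¹⁾ ⊗ a⁽²⁾.  By (HG3), (HG4) and the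
   counit axioms, can_Z : z ⊗ z' ↦ z₋₁ ⊗ z₀z' and a ⊗ z ↦ a⁽¹⁾ ⊗ S(a⁽²⁾)z are
   mutually inverse, i.e. Z is an A-Galois object.  As Z ≠ 0 there is a linear
   form φ on Z with φ(1) = 1; applying 1 ⊗ φ to α(a⁽¹⁾S(a⁽²⁾)) = ε(a) 1 ⊗ 1
   shows that R(a) = φ(a⁽¹⁾ S(a⁽²⁾)₀) S(a⁽²⁾)₋₁ satisfies a₁R(a₂) = ε(a)1.
   For the other identity, let can_A(x ⊗ y) = x₁ ⊗ x₂y and
   Φ(x ⊗ y ⊗ w) = x₋₁ ⊗ y₋₁ ⊗ x₀y₀w.  Coassociativity and multiplicativity of
   α give (can_A ⊗ 1)Φ = (1 ⊗ can_Z)(can_Z ⊗ 1); Φ is onto and the right-hand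
   side is bijective, so can_A ⊗ 1, and with it can_A, is injective.  Since
   can_A maps both x₁ ⊗ R(x₂)x₃ and x ⊗ 1 to x₁ ⊗ x₂, R(x₁)x₂ = ε(x)1.
   The B-half of a Hopf-Galois system is the A-half of one for B^op,cop
   coacting on Z^op, so B is treated by the same argument.
   Tensors are only compared through multilinear forms, so each map between
   tensor products enters as the pullback of forms along it. *)

Section LinearForms.
Variable k : fieldType.
Implicit Types U V : lmodType k.

Lemma linear_for0 U (V : zmodType) (s : GRing.Scale.law k V) (f : U -> V) :
  linear_for s f -> f 0 = 0.
Proof.
by move/GRing.zmod_morphism_linear => fB; rewrite -[in f 0](subrr 0) fB subrr.
Qed.

Lemma linear_forD U (V : zmodType) (s : GRing.Scale.law k V) (f : U -> V) :
  linear_for s f -> {morph f : x y / x + y}.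
Proof. by case/GRing.semilinear_linear. Qed.

Lemma linear_for_sum U (V : zmodType) (s : GRing.Scale.law k V) (f : U -> V) :
  linear_for s f -> forall I (r : seq I) (g : I -> U),
  f (\sum_(i <- r) g i) = \sum_(i <- r) f (g i).
Proof.
by move=> lf I r g; rewrite (big_morph f (linear_forD lf) (linear_for0 lf)).
Qed.

Lemma scalarZ V (F : V -> k) : scalar F -> forall a x, F (a *: x) = a * F x.
Proof. by move=> hF a x; apply: (GRing.scalable_linear hF). Qed.

Section Separation.
Variables (V : lmodType k) (v : V).

(* Not required to contain 0: the union of the empty chain must qualify. *)
Definition subspace_avoiding (X : set V) : Prop :=
  [/\ forall x y, X x -> X y -> X (x + y),
      forall (a : k) x, X x -> X (a *: x) & ~ X v].

Lemma exists_maximal_subspace_avoiding : exists A, subspace_avoiding A /\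
  forall B, (A `<` B)%classic -> ~ subspace_avoiding B.
Proof.
apply: Zorn_bigcup => F FP Ftot; split.
- move=> x y [X FX Xx] [Y FY Yy].
  have [XY|YX] := Ftot X Y FX FY.
  + by exists Y => //; have [+ _ _] := FP Y FY; apply => //; exact: XY.
  + by exists X => //; have [+ _ _] := FP X FX; apply => //; exact: YX.
- by move=> a x [X FX Xx]; exists X => //; have [_ + _] := FP X FX; apply.
- by move=> [X FX Xv]; have [_ _] := FP X FX; apply.
Qed.

Hypothesis v_neq0 : v != 0.

Section Maximal.
Variable A : set V.
Hypotheses (A_avoid : subspace_avoiding A)
  (A_max : forall B, (A `<` B)%classic -> ~ subspace_avoiding B).

Lemma maximal_avoiding0 : A 0.
Proof.
have [_ AZ Av] := A_avoid.
have [[x Ax]|A0] := pselect (exists x, A x).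
  by rewrite -(scale0r x); apply: AZ.
apply: contrapT => nA0; apply: (A_max (B := [set 0])).
  by split=> [x Ax|sub]; [case: A0; exists x | apply: nA0; apply: sub].
split=> [_ _ -> ->|a _ ->|/= v0]; rewrite ?addr0 ?scaler0 //.
by move: v_neq0; rewrite v0 eqxx.
Qed.

Lemma maximal_avoidingB x y : A x -> A y -> A (x - y).
Proof.
by have [AD AZ _] := A_avoid => Ax Ay; rewrite -scaleN1r; apply/AD/AZ.
Qed.

Lemma maximal_avoiding_complement x : exists c : k, A (x - c *: v).
Proof.
have [AD AZ Av] := A_avoid.
pose B : set V := fun y => exists a (c : k), A a /\ y = a + c *: x.
have [[a [c [Aa va]]]|nBv] := pselect (B v).
  have [c0|c_neq0] := eqVneq c 0.
    by move: va; rewrite c0 scale0r addr0 => vA; rewrite vA in Av.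
  exists c^-1; suff -> : x - c^-1 *: v = - c^-1 *: a by apply: AZ.
  by rewrite va scalerDr scalerA mulVf // scale1r scaleNr opprD addrC addrNK.
have B_avoid : subspace_avoiding B.
  split=> // [_ _ [a [c [Aa ->]]] [a' [c' [Aa' ->]]]|b _ [a [c [Aa ->]]]].
    exists (a + a'), (c + c'); rewrite scalerDl addrACA.
    by split; first exact: AD.
  by exists (b *: a), (b * c); rewrite scalerDr scalerA; split; first exact: AZ.
have BA : (B `<=` A)%classic.
  apply: contrapT => nBA; apply: (A_max _ B_avoid); split=> // y Ay.
  by exists y, 0; rewrite scale0r addr0.
exists 0; rewrite scale0r subr0; apply: BA.
by exists 0, 1; rewrite add0r scale1r; split; first exact: maximal_avoiding0.
Qed.

Lemma maximal_avoiding_complement_uniq x c c' :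
  A (x - c *: v) -> A (x - c' *: v) -> c = c'.
Proof.
have [_ AZ Av] := A_avoid => Ac Ac'.
apply: contrapT => /eqP; rewrite -subr_eq0 => cc'.
apply: Av; rewrite -[v](scale1r) -(mulVf cc') -scalerA; apply: AZ.
suff -> : (c - c') *: v = (x - c' *: v) - (x - c *: v).
  exact: maximal_avoidingB.
by rewrite scalerBl opprB [RHS]addrC addrA addrNK.
Qed.

Lemma maximal_avoiding_scalar : exists F : V -> k, scalar F /\ F v = 1.
Proof.
have [AD AZ _] := A_avoid.
pose F x := projT1 (cid (maximal_avoiding_complement x)).
have FP x : A (x - F x *: v) by rewrite /F; case: cid.
exists F; split=> [a x y|].
  apply: (maximal_avoiding_complement_uniq (FP _)).
  rewrite scalerDl -scalerA opprD addrACA -scalerBr.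
  by apply: AD (FP y); apply: AZ.
apply: (maximal_avoiding_complement_uniq (FP _)).
by rewrite scale1r subrr; apply: maximal_avoiding0.
Qed.
End Maximal.

Lemma exists_scalar_eq1 : exists F : V -> k, scalar F /\ F v = 1.
Proof.
have [A [A_avoid A_max]] := exists_maximal_subspace_avoiding.
exact: maximal_avoiding_scalar A_avoid A_max.
Qed.
End Separation.

Lemma eq_from_scalar V (x y : V) :
  (forall F : V -> k, scalar F -> F x = F y) -> x = y.
Proof.
move=> Fxy; apply/eqP; rewrite -subr_eq0; apply: contraT => xy_neq0.
have [F [lF F1]] := exists_scalar_eq1 xy_neq0.
move: F1; rewrite -scaleN1r addrC lF (Fxy F lF) mulN1r addNr => /eqP.
by rewrite eq_sym oner_eq0.
Qed.
End LinearForms.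

Section MultilinearForms.
Variable k : fieldType.
Implicit Types U V W : lmodType k.

Lemma bilinP U V (f : U -> V -> k) :
  bilin f <-> (forall v, scalar (f^~ v)) /\ (forall u, scalar (f u)).
Proof.
split=> [[fl fr]|[fl fr]]; split.
- by move=> v a u u'; apply: fl.
- by move=> u a v v'; apply: fr.
- by move=> a u u' v; apply: fl.
- by move=> a u v v'; apply: fr.
Qed.

Lemma trilinP U V W (c : U -> V -> W -> k) :
  trilin c <-> [/\ forall v w, scalar (fun u => c u v w),
                   forall u w, scalar (fun v => c u v w) &
                   forall u v, scalar (c u v)].
Proof.
split=> [[c1 c2 c3]|[c1 c2 c3]]; split.
- by move=> v w a u u'; apply: c1.
- by move=> u w a v v'; apply: c2.
- by move=> u v a w w'; apply: c3.
- by move=> a u u' v w; apply: c1.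
- by move=> a u v v' w; apply: c2.
- by move=> a u v w w'; apply: c3.
Qed.

Lemma trilin_bilin12 U V W (c : U -> V -> W -> k) w :
  trilin c -> bilin (fun u v => c u v w).
Proof.
by case/trilinP=> c1 c2 _; apply/bilinP; split=> [v|u]; [exact: c1|exact: c2].
Qed.

Lemma trilin_bilin13 U V W (c : U -> V -> W -> k) v :
  trilin c -> bilin (fun u w => c u v w).
Proof.
by case/trilinP=> c1 _ c3; apply/bilinP; split=> [w|u]; [exact: c1|exact: c3].
Qed.

Lemma scalar_comp U V (F : V -> k) (g : U -> V) :
  scalar F -> linear g -> scalar (fun x => F (g x)).
Proof. by move=> hF hg a x y; rewrite hg hF. Qed.

Lemma scalar_mull V (c : k) (F : V -> k) :
  scalar F -> scalar (fun x => c * F x).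
Proof. by move=> hF a x y; rewrite hF mulrDr mulrCA. Qed.

Lemma scalar_mulr V (c : k) (F : V -> k) :
  scalar F -> scalar (fun x => F x * c).
Proof. by move=> hF a x y; rewrite hF mulrDl mulrA. Qed.

Lemma scalar_big V I (r : seq I) (G : I -> V -> k) :
  (forall i, scalar (G i)) -> scalar (fun x => \sum_(i <- r) G i x).
Proof.
move=> hG a x y; rewrite mulr_sumr -big_split.
by apply: eq_bigr => i _; rewrite hG.
Qed.

Lemma linear_comp U V W (f : V -> W) (g : U -> V) :
  linear f -> linear g -> linear (fun x => f (g x)).
Proof. by move=> hf hg a x y; rewrite hg hf. Qed.

Lemma mulr_linear (A : algType k) (z : A) : linear (fun x : A => x * z).
Proof. by move=> a x y; rewrite mulrDl scalerAl. Qed.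

Lemma mull_linear (A : algType k) (z : A) : linear (fun x : A => z * x).
Proof. by move=> a x y; rewrite mulrDr scalerAr. Qed.

Lemma big_tscale U V (f : U -> V -> k) a (t : seq (U * V)) : bilin f ->
  \sum_(p <- tscale a t) f p.1 p.2 = a * \sum_(p <- t) f p.1 p.2.
Proof.
move/bilinP=> [fl _]; rewrite big_map mulr_sumr.
by apply: eq_bigr => p _; exact: (scalarZ (fl p.2)).
Qed.

Lemma tlinearP (X U V : lmodType k) (F : X -> seq (U * V)) :
  tlinear F <->
  forall f, bilin f -> scalar (fun x => \sum_(p <- F x) f p.1 p.2).
Proof.
split=> [F_lin f bf a x y|F_lin a x y f bf]; last first.
  by rewrite F_lin // big_cat big_tscale.
by rewrite (F_lin a x y f bf) big_cat big_tscale.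
Qed.

Lemma big_tmap_l (U V W X : Type) (f : U -> seq (V * W)) (t : seq (U * X))
    (c : V -> W -> X -> k) :
  \sum_(p <- tmap_l f t) c p.1.1 p.1.2 p.2 =
  \sum_(p <- t) \sum_(q <- f p.1) c q.1 q.2 p.2.
Proof. exact: big_allpairs_dep. Qed.

Lemma big_tmap_r (U V W X : Type) (f : X -> seq (V * W)) (t : seq (U * X))
    (c : U -> V -> W -> k) :
  \sum_(p <- tmap_r f t) c p.1.1 p.1.2 p.2 =
  \sum_(p <- t) \sum_(q <- f p.2) c p.1 q.1 q.2.
Proof. exact: big_allpairs_dep. Qed.

Lemma big_tmul (U V : algType k) (t s : seq (U * V)) (f : U -> V -> k) :
  \sum_(p <- tmul t s) f p.1 p.2 =
  \sum_(p <- t) \sum_(q <- s) f (p.1 * q.1) (p.2 * q.2).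
Proof. exact: big_allpairs_dep. Qed.

Lemma teq3_tmap (U Y : Type) (V W X : lmodType k) (f : U -> seq (V * W))
    (t : seq (U * X)) (g : Y -> seq (W * X)) (s : seq (V * Y))
    (c : V -> W -> X -> k) :
  teq3 (tmap_l f t) (tmap_r g s) -> trilin c ->
  \sum_(p <- t) \sum_(q <- f p.1) c q.1 q.2 p.2 =
  \sum_(p <- s) \sum_(q <- g p.2) c p.1 q.1 q.2.
Proof. by move=> eq_ts tc; rewrite -big_tmap_l eq_ts // big_tmap_r. Qed.
End MultilinearForms.

Section Bialgebra.
Variables (k : fieldType) (H : algType k) (D : H -> seq (H * H)) (e : H -> k).
Hypothesis H_bialg : is_bialgebra D e.

Lemma coprod_scalar (f : H -> H -> k) :
  bilin f -> scalar (fun x => \sum_(p <- D x) f p.1 p.2).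
Proof. by have [[/tlinearP D_lin _ _] _ _ _ _] := H_bialg; apply: D_lin. Qed.

Lemma coprod_coassoc (c : H -> H -> H -> k) x : trilin c ->
  \sum_(p <- D x) \sum_(q <- D p.1) c q.1 q.2 p.2 =
  \sum_(p <- D x) \sum_(q <- D p.2) c p.1 q.1 q.2.
Proof. by have [_ _ D_coassoc _ _] := H_bialg; apply: teq3_tmap. Qed.

Lemma counit_scalar : scalar e.
Proof. by have [_ []] := H_bialg. Qed.

Lemma counitl x : \sum_(p <- D x) e p.1 *: p.2 = x.
Proof. by have [] := H_bialg. Qed.

Lemma counitr x : \sum_(p <- D x) e p.2 *: p.1 = x.
Proof. by have [] := H_bialg. Qed.

(* The pullback of G along the Galois map x ⊗ y ↦ x₁ ⊗ x₂y; this map is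
   injective iff every bilinear form is such a pullback. *)
Definition galois_form (G : H -> H -> k) : H -> H -> k :=
  fun x y => \sum_(p <- D x) G p.1 (p.2 * y).

Lemma galois_form_bilin G : bilin G -> bilin (galois_form G).
Proof.
move/bilinP=> [Gl Gr]; apply/bilinP; split=> [y|x].
  apply: (coprod_scalar (f := fun u v => G u (v * y))).
  apply/bilinP; split=> [v|u]; first exact: Gl.
  exact: scalar_comp (Gr u) (mulr_linear y).
by apply: scalar_big => p; exact: scalar_comp (Gr _) (mull_linear _).
Qed.

Section LeftAntipode.
Variable R : H -> H.
Hypotheses (R_linear : linear R)
  (R_right : forall a, \sum_(p <- D a) p.1 * R p.2 = e a *: 1).

Lemma galois_form_antipode G a : bilin G ->
  \sum_(p <- D a) \sum_(q <- D p.2) galois_form G p.1 (R q.1 * q.2) =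
  galois_form G a 1.
Proof.
move/bilinP=> [Gl Gr].
have RM_linear x1 x3 : linear (fun x2 => x1 * (R x2 * x3)).
  exact: linear_comp (mull_linear _) (linear_comp (mulr_linear _) R_linear).
have MM_linear x1 x2 : linear (fun x3 : H => x1 * (x2 * x3)).
  exact: linear_comp (mull_linear _) (mull_linear _).
pose c1 x1 x2 x3 := \sum_(q <- D x3) G x1 (x2 * (R q.1 * q.2)).
have c1_trilin : trilin c1.
  apply/trilinP; split=> [x2 x3|x1 x3|x1 x2].
  - by apply: scalar_big => q; apply: Gl.
  - by apply: scalar_big => q; exact: scalar_comp (Gr _) (mulr_linear _).
  - apply: (coprod_scalar (f := fun u v => G x1 (x2 * (R u * v)))).
    by apply/bilinP; split=> [v|u]; apply: scalar_comp (Gr _) _.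
transitivity (\sum_(p <- D a) \sum_(q <- D p.1) c1 q.1 q.2 p.2).
  by apply: eq_bigr => p _; rewrite exchange_big.
rewrite coprod_coassoc //; apply: eq_bigr => p _ /=.
pose c2 x1 x2 x3 := G p.1 (x1 * (R x2 * x3)).
have c2_trilin : trilin c2.
  apply/trilinP; split=> [x2 x3|x1 x3|x1 x2]; apply: scalar_comp (Gr _) _ => //.
  exact: mulr_linear.
transitivity (\sum_(s <- D p.2) \sum_(q <- D s.2) c2 s.1 q.1 q.2) => //.
rewrite -coprod_coassoc // mulr1 -[in RHS](counitl p.2).
rewrite (linear_for_sum (Gr _)); apply: eq_bigr => s _.
under eq_bigr do rewrite /c2 mulrA.
by rewrite -(linear_for_sum (Gr _)) -mulr_suml R_right -scalerAl mul1r.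
Qed.

Lemma antipode_left_of_galois :
  (forall f, bilin f -> exists2 G, bilin G & galois_form G =2 f) ->
  forall a, \sum_(p <- D a) R p.1 * p.2 = e a *: 1.
Proof.
move=> galois_onto a; apply: eq_from_scalar => psi psi_scalar.
have f_bilin : bilin (fun u v => e u * psi v).
  apply/bilinP; split=> [v|u]; last exact: scalar_mull.
  exact: scalar_mulr counit_scalar.
have [G G_bilin G_f] := galois_onto _ f_bilin.
have psiRD_scalar : scalar (fun y => \sum_(q <- D y) psi (R q.1 * q.2)).
  apply: (coprod_scalar (f := fun u v => psi (R u * v))); apply/bilinP.
  by split=> [v|u]; apply: scalar_comp psi_scalar _;
    [exact: linear_comp (mulr_linear _) R_linear|exact: mull_linear].
rewrite scalarZ // -G_f -galois_form_antipode // -[in LHS](counitl a).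
rewrite (linear_for_sum psi_scalar) (linear_for_sum psiRD_scalar).
apply: eq_bigr => p _; rewrite (scalarZ psiRD_scalar) mulr_sumr.
by apply: eq_bigr => q _; rewrite G_f.
Qed.
End LeftAntipode.
End Bialgebra.

Section GaloisObject.
Variables (k : fieldType) (H Z : algType k) (T : lmodType k).
Variables (D : H -> seq (H * H)) (e : H -> k).
Variables (al : Z -> seq (H * Z)) (ga : H -> seq (Z * T)) (S : T -> Z).
Hypotheses (H_bialg : is_bialgebra D e) (al_morph : talg_morph al)
  (al_coassoc : forall z, teq3 (tmap_l D (al z)) (tmap_r al (al z)))
  (ga_linear : tlinear ga)
  (ga_coassoc : forall a, teq3 (tmap_l al (ga a)) (tmap_r ga (D a)))
  (S_linear : linear S)
  (ga_S : forall a, \sum_(p <- ga a) p.1 * S p.2 = e a *: 1)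
  (al_ga_S : forall z,
     teq2 [seq (q.1, S q.2 * p.2) | p <- al z, q <- ga p.1] [:: (z, 1)]).

Lemma coact_scalar (f : H -> Z -> k) :
  bilin f -> scalar (fun z => \sum_(p <- al z) f p.1 p.2).
Proof. by have [/tlinearP al_lin _ _] := al_morph; apply: al_lin. Qed.

Lemma coact_mul (f : H -> Z -> k) z z' : bilin f ->
  \sum_(p <- al (z * z')) f p.1 p.2 =
  \sum_(p <- al z) \sum_(q <- al z') f (p.1 * q.1) (p.2 * q.2).
Proof. by have [_ _ al_mul] := al_morph => bf; rewrite al_mul // big_tmul. Qed.

Lemma coact1 (f : H -> Z -> k) : bilin f -> \sum_(p <- al 1) f p.1 p.2 = f 1 1.
Proof. by have [_ al1 _] := al_morph => bf; rewrite al1 // big_seq1. Qed.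

Lemma coact_coassoc (c : H -> H -> Z -> k) z : trilin c ->
  \sum_(p <- al z) \sum_(q <- D p.1) c q.1 q.2 p.2 =
  \sum_(p <- al z) \sum_(q <- al p.2) c p.1 q.1 q.2.
Proof. exact: teq3_tmap. Qed.

Lemma gamma_scalar (f : Z -> T -> k) :
  bilin f -> scalar (fun a => \sum_(p <- ga a) f p.1 p.2).
Proof. exact: (iffLR (tlinearP _) ga_linear). Qed.

Lemma gamma_coact_S (f : H -> Z -> k) a w : bilin f ->
  \sum_(q <- ga a) \sum_(r <- al q.1) f r.1 (r.2 * (S q.2 * w)) = f a w.
Proof.
move=> /[dup] bf /bilinP[fl fr].
have c_trilin : trilin (fun x z t => f x (z * (S t * w))).
  apply/trilinP; split=> [z t|x t|x z]; first exact: fl.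
    exact: scalar_comp (fr x) (mulr_linear _).
  apply: scalar_comp (fr x) (linear_comp (mull_linear z) _).
  exact: linear_comp (mulr_linear w) S_linear.
rewrite (teq3_tmap (ga_coassoc a) c_trilin) -[in RHS](counitr H_bialg a).
rewrite (linear_for_sum (fl w)); apply: eq_bigr => p _.
rewrite (scalarZ (fl w)) -(scalarZ (fr p.1)) -(linear_for_sum (fr _)).
rewrite -[in RHS](mul1r w) scalerAl -ga_S mulr_suml.
by under eq_bigr do rewrite mulrA.
Qed.

Lemma coact_gamma_S (g : Z -> Z -> k) z w : bilin g ->
  \sum_(p <- al z) \sum_(q <- ga p.1) g q.1 (S q.2 * p.2 * w) = g z w.
Proof.
move=> /bilinP[gl gr].
have gw_bilin : bilin (fun u v => g u (v * w)).
  apply/bilinP; split=> [v|u]; first exact: gl.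
  exact: scalar_comp (gr u) (mulr_linear w).
by have := al_ga_S z gw_bilin; rewrite big_allpairs_dep big_seq1 mul1r.
Qed.

(* Pullbacks along Φ : x ⊗ y ⊗ w ↦ x₋₁ ⊗ y₋₁ ⊗ x₀y₀w, along
   Ω : a ⊗ b ⊗ w ↦ a⁽¹⁾ ⊗ S(a⁽²⁾)b⁽¹⁾ ⊗ S(b⁽²⁾)w (a left inverse of
   (1 ⊗ can_Z)(can_Z ⊗ 1)), and along can_A ⊗ 1. *)
Definition coact2_form (c : H -> H -> Z -> k) : Z -> Z -> Z -> k :=
  fun x y w => \sum_(r <- al x) \sum_(r' <- al y) c r.1 r'.1 (r.2 * r'.2 * w).

Definition gamma2_form (d : Z -> Z -> Z -> k) : H -> H -> Z -> k :=
  fun a b w =>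
    \sum_(q <- ga a) \sum_(q' <- ga b) d q.1 (S q.2 * q'.1) (S q'.2 * w).

Definition galois3_form (g : H -> H -> Z -> k) : H -> H -> Z -> k :=
  fun a b w => galois_form D (fun u v => g u v w) a b.

Lemma coact2_form_trilin c : trilin c -> trilin (coact2_form c).
Proof.
move/trilinP=> [c1 c2 c3]; apply/trilinP; split=> [y w|x w|x y].
- apply: (coact_scalar
    (f := fun a z => \sum_(r' <- al y) c a r'.1 (z * r'.2 * w))).
  apply/bilinP; split=> [z|a]; apply: scalar_big => r'; first exact: c1.
  exact: scalar_comp (c3 _ _) (linear_comp (mulr_linear _) (mulr_linear _)).
- apply: scalar_big => r.
  apply: (coact_scalar (f := fun a z => c r.1 a (r.2 * z * w))).
  apply/bilinP; split=> [z|a]; first exact: c2.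
  exact: scalar_comp (c3 _ _) (linear_comp (mulr_linear _) (mull_linear _)).
- apply: scalar_big => r; apply: scalar_big => r'.
  exact: scalar_comp (c3 _ _) (mull_linear _).
Qed.

Lemma gamma2_form_trilin d : trilin d -> trilin (gamma2_form d).
Proof.
move/trilinP=> [d1 d2 d3]; apply/trilinP; split=> [b w|a w|a b].
- apply: (gamma_scalar
    (f := fun z t => \sum_(q' <- ga b) d z (S t * q'.1) (S q'.2 * w))).
  apply/bilinP; split=> [t|z]; apply: scalar_big => q'; first exact: d1.
  exact: scalar_comp (d2 _ _) (linear_comp (mulr_linear _) S_linear).
- apply: scalar_big => q.
  apply: (gamma_scalar (f := fun z t => d q.1 (S q.2 * z) (S t * w))).
  apply/bilinP; split=> [t|z].
    exact: scalar_comp (d2 _ _) (mull_linear _).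
  exact: scalar_comp (d3 _ _) (linear_comp (mulr_linear _) S_linear).
- apply: scalar_big => q; apply: scalar_big => q'.
  exact: scalar_comp (d3 _ _) (mull_linear _).
Qed.

Lemma galois3_form_trilin g : trilin g -> trilin (galois3_form g).
Proof.
move=> /[dup] tg /trilinP[_ _ g3]; apply/trilinP.
have gw_bilin w := galois_form_bilin H_bialg (trilin_bilin12 w tg).
split=> [b w|a w|a b].
- by have /bilinP[+ _] := gw_bilin w; apply.
- by have /bilinP[_] := gw_bilin w; apply.
- by apply: scalar_big => p; apply: g3.
Qed.

Lemma gamma2_coact2_form c x y : trilin c ->
  \sum_(q <- ga x) \sum_(q' <- ga y) coact2_form c q.1 q'.1 (S q'.2 * S q.2) =
  c x y 1.
Proof.
move=> /[dup] tc /trilinP[_ c2 c3].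
rewrite -[RHS](gamma_coact_S x 1 (trilin_bilin13 y tc)).
apply: eq_bigr => q _; rewrite exchange_big; apply: eq_bigr => r _ /=.
have f_bilin : bilin (fun b m => c r.1 b (r.2 * m)).
  apply/bilinP; split=> [m|b]; first exact: c2.
  exact: scalar_comp (c3 _ _) (mull_linear _).
rewrite mulr1 -[RHS](gamma_coact_S y (S q.2) f_bilin).
by apply: eq_bigr => q' _; apply: eq_bigr => r' _; rewrite !mulrA.
Qed.

Lemma coact2_gamma2_form d x y w : trilin d ->
  \sum_(r <- al x) \sum_(m <- al (r.2 * y)) gamma2_form d r.1 m.1 (m.2 * w) =
  d x y w.
Proof.
move=> /[dup] td /trilinP[_ d2 d3].
rewrite -[RHS](coact_gamma_S x y (trilin_bilin12 w td)).
apply: eq_bigr => r _; rewrite exchange_big; apply: eq_bigr => q _ /=.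
have g_bilin : bilin (fun u v => d q.1 (S q.2 * u) v).
  apply/bilinP; split=> [v|u]; last exact: d3.
  exact: scalar_comp (d2 _ _) (mull_linear _).
rewrite -mulrA -[RHS](coact_gamma_S (r.2 * y) w g_bilin).
by apply: eq_bigr => m _; apply: eq_bigr => q' _; rewrite !mulrA.
Qed.

Lemma coact2_galois3_form g x y w : trilin g ->
  coact2_form (galois3_form g) x y w =
  \sum_(r <- al x) \sum_(m <- al (r.2 * y)) g r.1 m.1 (m.2 * w).
Proof.
move/trilinP=> [g1 g2 g3].
pose c a1 a2 z := \sum_(r' <- al y) g a1 (a2 * r'.1) (z * r'.2 * w).
have c_trilin : trilin c.
  apply/trilinP; split=> [a2 z|a1 z|a1 a2]; apply: scalar_big => r'.
  - exact: g1.
  - exact: scalar_comp (g2 _ _) (mulr_linear _).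
  - exact: scalar_comp (g3 _ _) (linear_comp (mulr_linear _) (mulr_linear _)).
transitivity (\sum_(r <- al x) \sum_(p <- D r.1) c p.1 p.2 r.2).
  by apply: eq_bigr => r _; rewrite exchange_big.
rewrite coact_coassoc //; apply: eq_bigr => r _.
have f_bilin : bilin (fun a z => g r.1 a (z * w)).
  apply/bilinP; split=> [z|a]; first exact: g2.
  exact: scalar_comp (g3 _ _) (mulr_linear _).
by rewrite [RHS](coact_mul _ _ f_bilin).
Qed.

Lemma galois_form_retraction c x y : trilin c ->
  galois_form D (fun u v => gamma2_form (coact2_form c) u v 1) x y = c x y 1.
Proof.
move=> tc; have tO := gamma2_form_trilin (coact2_form_trilin tc).
rewrite -[RHS](gamma2_coact2_form x y tc).
rewrite -[LHS](gamma2_coact2_form x y (galois3_form_trilin tO)).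
apply: eq_bigr => q _; apply: eq_bigr => q' _.
rewrite coact2_galois3_form // coact2_gamma2_form //.
exact: coact2_form_trilin.
Qed.

Section Antipode.
Variable phi : Z -> k.
Hypotheses (phi_scalar : scalar phi) (phi1 : phi 1 = 1).

Definition galois_antipode (a : H) : H :=
  \sum_(q <- ga a) \sum_(r <- al (S q.2)) phi (q.1 * r.2) *: r.1.

Lemma scalar_galois_antipode (psi : H -> k) a : scalar psi ->
  psi (galois_antipode a) =
  \sum_(q <- ga a) \sum_(r <- al (S q.2)) phi (q.1 * r.2) * psi r.1.
Proof.
move=> psi_scalar; rewrite (linear_for_sum psi_scalar).
apply: eq_bigr => q _; rewrite (linear_for_sum psi_scalar).
by apply: eq_bigr => r _; rewrite scalarZ.
Qed.

Lemma phi_psi_bilin (psi : H -> k) (u : H) (z : Z) : scalar psi ->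
  bilin (fun x z' => phi (z * z') * psi (u * x)).
Proof.
move=> psi_scalar; apply/bilinP; split=> [z'|x].
  exact: scalar_mull (scalar_comp psi_scalar (mull_linear _)).
exact: scalar_mulr (scalar_comp phi_scalar (mull_linear _)).
Qed.

Lemma galois_antipode_linear : linear galois_antipode.
Proof.
move=> a x y; apply: eq_from_scalar => psi psi_scalar.
rewrite (linear_forD psi_scalar) scalarZ // !scalar_galois_antipode //.
apply: (gamma_scalar
  (f := fun z t => \sum_(r <- al (S t)) phi (z * r.2) * psi r.1)).
apply/bilinP; split=> [t|z].
  apply: scalar_big => r.
  exact: scalar_mulr (scalar_comp phi_scalar (mulr_linear _)).
apply: (scalar_comp
  (F := fun z' => \sum_(r <- al z') phi (z * r.2) * psi r.1)) S_linear.
have := coact_scalar (phi_psi_bilin 1 z psi_scalar).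
by under eq_fun do under eq_bigr do rewrite mul1r.
Qed.

Lemma galois_antipode_right a :
  \sum_(p <- D a) p.1 * galois_antipode p.2 = e a *: 1.
Proof.
apply: eq_from_scalar => psi psi_scalar.
rewrite (linear_for_sum psi_scalar) scalarZ //.
pose c x z t := \sum_(r <- al (S t)) phi (z * r.2) * psi (x * r.1).
have c_trilin : trilin c.
  apply/trilinP; split=> [z t|x t|x z].
  - apply: scalar_big => r.
    exact: scalar_mull (scalar_comp psi_scalar (mulr_linear _)).
  - apply: scalar_big => r.
    exact: scalar_mulr (scalar_comp phi_scalar (mulr_linear _)).
  - pose F z' := \sum_(r <- al z') phi (z * r.2) * psi (x * r.1).
    apply: (scalar_comp (F := F)) S_linear.
    exact: coact_scalar (phi_psi_bilin x z psi_scalar).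
transitivity (\sum_(p <- D a) \sum_(q <- ga p.2) c p.1 q.1 q.2).
  apply: eq_bigr => p _.
  apply: (scalar_galois_antipode (psi := fun x => psi (p.1 * x))).
  exact: scalar_comp psi_scalar (mull_linear _).
rewrite -(teq3_tmap (ga_coassoc a) c_trilin).
pose L z := \sum_(m <- al z) phi m.2 * psi m.1.
have L_bilin : bilin (fun x z => phi z * psi x).
  by apply/bilinP; split=> [z|x]; [exact: scalar_mull|exact: scalar_mulr].
have L_scalar : scalar L := coact_scalar L_bilin.
transitivity (\sum_(q <- ga a) L (q.1 * S q.2)).
  by apply: eq_bigr => q _; rewrite /L (coact_mul _ _ L_bilin).
rewrite -(linear_for_sum L_scalar) ga_S (scalarZ L_scalar).
by rewrite /L (coact1 L_bilin) phi1 mul1r.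
Qed.

Lemma galois_form_onto f :
  bilin f -> exists2 G, bilin G & galois_form D G =2 f.
Proof.
move=> /bilinP[fl fr].
pose c u v w := f u v * phi w.
have c_trilin : trilin c.
  apply/trilinP; split=> *; last exact: scalar_mull.
    exact: scalar_mulr.
  exact: scalar_mulr.
exists (fun u v => gamma2_form (coact2_form c) u v 1).
  exact: trilin_bilin12 (gamma2_form_trilin (coact2_form_trilin c_trilin)).
by move=> x y; rewrite galois_form_retraction // /c phi1 mulr1.
Qed.
End Antipode.

Theorem galois_has_antipode : has_antipode D e.
Proof.
have [phi [phi_scalar phi1]] := exists_scalar_eq1 (oner_neq0 Z).
have R_linear := galois_antipode_linear phi_scalar.
have R_right := galois_antipode_right phi_scalar phi1.
exists (HB.pack_for {linear H -> H} (galois_antipode phi)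
  (GRing.isLinear.Build k H H *:%R _ R_linear)).
split; last exact: R_right.
exact (antipode_left_of_galois H_bialg R_linear R_right
  (galois_form_onto phi_scalar phi1)).
Qed.
End GaloisObject.

Lemma coact_gamma_S_of_delta (k : fieldType) (A B : Type) (Z : algType k)
    (T : lmodType k) (eB : B -> k) (al : Z -> seq (A * Z))
    (ga : A -> seq (Z * T)) (be : Z -> seq (Z * B)) (de : B -> seq (T * Z))
    (S : T -> Z) :
  linear S ->
  (forall z, teq3 (tmap_l ga (al z)) (tmap_r de (be z))) ->
  (forall b, \sum_(p <- de b) S p.1 * p.2 = eB b *: 1) ->
  (forall z, \sum_(p <- be z) eB p.2 *: p.1 = z) ->
  forall z, teq2 [seq (q.1, S q.2 * p.2) | p <- al z, q <- ga p.1] [:: (z, 1)].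
Proof.
move=> S_linear ga_de de_S be_counit z f /[dup] f_bilin /bilinP[fl fr].
have c_trilin : trilin (fun z1 t z2 => f z1 (S t * z2)).
  apply/trilinP; split=> [t z2|z1 z2|z1 t]; first exact: fl.
    exact: scalar_comp (fr _) (linear_comp (mulr_linear _) S_linear).
  exact: scalar_comp (fr _) (mull_linear _).
rewrite big_allpairs_dep big_seq1 (teq3_tmap (ga_de z) c_trilin).
rewrite -[in RHS](be_counit z) (linear_for_sum (fl 1)); apply: eq_bigr => p _.
by rewrite -(linear_for_sum (fr _)) de_S (scalarZ (fr _)) (scalarZ (fl _)).
Qed.

HB.instance Definition _ (R : pzRingType) (V : lmodType R) :=
  GRing.Lmodule.on V^c.
HB.instance Definition _ (R : pzRingType) (A : algType R) :=
  GRing.Lmodule_isLalgebra.Build R A^c (fun a (u v : A) => scalerAr a v u).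
HB.instance Definition _ (R : pzRingType) (A : algType R) :=
  GRing.Lalgebra_isAlgebra.Build R A^c (fun a (u v : A) => scalerAl a v u).

Definition tflip (U V : Type) (t : seq (U * V)) : seq (V * U) :=
  [seq (p.2, p.1) | p <- t].

Definition trev3 (U V W : Type) (t : seq (U * V * W)) : seq (W * V * U) :=
  [seq ((p.2, p.1.2), p.1.1) | p <- t].

Lemma tmap_l_tflip (U V W X : Type) (f : X -> seq (V * W)) (t : seq (U * X)) :
  tmap_l (fun x => tflip (f x)) (tflip t) = trev3 (tmap_r f t).
Proof.
rewrite /tmap_l /tmap_r /trev3 /tflip; elim: t => //= p t IH.
by rewrite map_cat IH -!map_comp.
Qed.

Lemma tmap_r_tflip (U V W X : Type) (f : U -> seq (V * W)) (t : seq (U * X)) :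
  tmap_r (fun x => tflip (f x)) (tflip t) = trev3 (tmap_l f t).
Proof.
rewrite /tmap_l /tmap_r /trev3 /tflip; elim: t => //= p t IH.
by rewrite map_cat IH -!map_comp.
Qed.

Section Flip.
Variable k : fieldType.
Implicit Types U V W : lmodType k.

Lemma teq2_tflip U V (t t' : seq (U * V)) :
  teq2 t t' -> teq2 (tflip t) (tflip t').
Proof.
move=> eq_t f /bilinP[fl fr]; rewrite !big_map.
apply: (eq_t (fun u v => f v u)).
by apply/bilinP; split=> [v|u]; [exact: fr|exact: fl].
Qed.

Lemma teq3_sym U V W (t t' : seq (U * V * W)) : teq3 t t' -> teq3 t' t.
Proof. by move=> eq_t c tc; rewrite eq_t. Qed.

Lemma teq3_trev3 U V W (t t' : seq (U * V * W)) :
  teq3 t t' -> teq3 (trev3 t) (trev3 t').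
Proof.
move=> eq_t c /trilinP[c1 c2 c3]; rewrite !big_map.
apply: (eq_t (fun u v w => c w v u)).
by apply/trilinP; split=> [v w|u w|u v]; [exact: c3|exact: c2|exact: c1].
Qed.

Lemma teq3_tmap_tflip (X Y : Type) U V W (f : X -> seq (V * W))
    (t : seq (U * X)) (g : Y -> seq (U * V)) (s : seq (Y * W)) :
  teq3 (tmap_l g s) (tmap_r f t) ->
  teq3 (tmap_l (fun x => tflip (f x)) (tflip t))
       (tmap_r (fun y => tflip (g y)) (tflip s)).
Proof.
by move=> eq_st; rewrite tmap_l_tflip tmap_r_tflip; apply/teq3_trev3/teq3_sym.
Qed.

Lemma tlinear_tflip (X U V : lmodType k) (F : X -> seq (U * V)) :
  tlinear F -> tlinear (fun x : X^c => tflip (F x) : seq (V^c * U^c)).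
Proof.
move/tlinearP=> F_lin; apply/tlinearP => f /bilinP[fl fr] a x y /=.
rewrite !big_map; apply: (F_lin (fun u v => f v u)).
by apply/bilinP; split=> [v|u]; [exact: fr|exact: fl].
Qed.

Lemma talg_morph_tflip (X U V : algType k) (F : X -> seq (U * V)) :
  talg_morph F -> talg_morph (fun x : X^c => tflip (F x) : seq (V^c * U^c)).
Proof.
case=> F_lin F1 F_mul; split; [exact: tlinear_tflip|exact: teq2_tflip F1|].
move=> x y f /bilinP[fl fr]; have f'_bilin : bilin (fun u v => f v u).
  by apply/bilinP; split=> [v|u]; [exact: fr|exact: fl].
rewrite big_map (F_mul y x _ f'_bilin).
rewrite (big_tmul (F y) (F x) (fun (u : U) (v : V) => f v u)) big_tmul.
by rewrite big_map exchange_big; apply: eq_bigr => p _; rewrite big_map.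
Qed.

Lemma is_bialgebra_tflip (H : algType k) (D : H -> seq (H * H)) (e : H -> k) :
  is_bialgebra D e ->
  is_bialgebra (fun x : H^c => tflip (D x) : seq (H^c * H^c)) e.
Proof.
case=> D_morph [e_lin e1 e_mul] D_coassoc counitl counitr; split.
- exact: talg_morph_tflip.
- by split=> // x y; rewrite mulrC; apply: e_mul.
- by move=> a; apply: teq3_tmap_tflip.
- by move=> a; rewrite big_map.
- by move=> a; rewrite big_map.
Qed.

Lemma has_antipode_tflip (H : algType k) (D : H -> seq (H * H)) (e : H -> k) :
  has_antipode (fun x : H^c => tflip (D x) : seq (H^c * H^c)) e ->
  has_antipode D e.
Proof.
case=> S [S_left S_right]; exists S.
by split=> a; [rewrite -[RHS]S_right|rewrite -[RHS]S_left]; rewrite big_map.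
Qed.
End Flip.

Theorem corollary1p3 (k : fieldType) (A B Z T : algType k)
  (DA : A -> seq (A * A)) (eA : A -> k)
  (DB : B -> seq (B * B)) (eB : B -> k)
  (alpha : Z -> seq (A * Z)) (beta : Z -> seq (Z * B))
  (gamma : A -> seq (Z * T)) (delta : B -> seq (T * Z))
  (S : {linear T -> Z}) :
  hopf_galois_system DA eA DB eB alpha beta gamma delta S ->
  has_antipode DA eA /\ has_antipode DB eB.
Proof.
case=> [[A_bialg B_bialg]
  [[al_morph al_coassoc al_counit] be_morph be_coassoc be_counit _]
  [[ga_linear _ _] [de_linear _ _] ga_de ga_coassoc de_coassoc] [ga_S de_S]].
have S_linear : linear S := linearP S.
split.
  apply: (galois_has_antipode A_bialg al_morph al_coassoc ga_linear ga_coassoc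
    S_linear ga_S).
  exact: (coact_gamma_S_of_delta S_linear ga_de de_S be_counit).
apply/has_antipode_tflip/(galois_has_antipode (is_bialgebra_tflip B_bialg)
  (talg_morph_tflip be_morph) _ (tlinear_tflip de_linear) _ S_linear).
- by move=> z; apply: teq3_tmap_tflip (be_coassoc z).
- by move=> b; apply: teq3_tmap_tflip (teq3_sym (de_coassoc b)).
- by move=> b; rewrite big_map; apply: de_S.
apply: (coact_gamma_S_of_delta (Z := Z^c) S_linear
  (fun z => teq3_tmap_tflip (ga_de z))) => [a|z]; rewrite big_map.
- exact: ga_S.
- exact: al_counit.
Qed.
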